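(* Let $n\in\mathbb{N}$ and let $\frac{a}{cn}$ and $\frac{b}{d}$ be positive rationals with $a,b,c,d\in\mathbb{N}$ and $|ad-bcn|=1$. Then every real $\alpha$ with $\min\{\frac{a}{cn},\frac{b}{d}\}\le\alpha\le\max\{\frac{a}{cn},\frac{b}{d}\}$ is not an infinite loop mod $n$.
   Context: For $\alpha$ with continued fraction $[a_0;a_1,\ldots]$ and convergent denominators $q_{-1}=0,q_0=1,q_k=a_kq_{k-1}+q_{k-2}$, the semi-convergent denominators are $mq_k+q_{k-1}$, $0\le m\le a_{k+1}$. A real $\alpha>0$ is an \emph{infinite loop mod $n$} if none of its semi-convergent denominators is divisible by $n$, except $q_{-1}=0$. For rational $\alpha$, both finite continued fraction expansions are considered and each is regarded as ending with a partial quotient equal to $\infty$, so that after the last convergent $p_k/q_k$ all semi-convergents $(mp_k+p_{k-1})/(mq_k+q_{k-1})$, $m\ge0$, are included. *)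

From Stdlib Require Import Reals Lia ZArith Arith.
Open Scope R_scope.

(* A sequence of partial quotients is a function  a : nat -> nat  with
   a 0 = a_0 and a i = a_i; only finitely many are used for a finite
   expansion.  (a_0 is a natural number since alpha > 0.) *)

(* (q_{k-1}, q_k) with q_{-1} = 0, q_0 = 1, q_k = a_k q_{k-1} + q_{k-2}. *)
Fixpoint cf_qpair (a : nat -> nat) (k : nat) : nat * nat :=
  match k with
  | O => (0%nat, 1%nat)
  | S k' => let '(x, y) := cf_qpair a k' in (y, (a (S k') * y + x)%nat)
  end.

(* (p_{k-1}, p_k) with p_{-1} = 1, p_0 = a_0, p_k = a_k p_{k-1} + p_{k-2}. *)
Fixpoint cf_ppair (a : nat -> nat) (k : nat) : nat * nat :=
  match k with
  | O => (1%nat, a 0%nat)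
  | S k' => let '(x, y) := cf_ppair a k' in (y, (a (S k') * y + x)%nat)
  end.

Definition cf_q (a : nat -> nat) (k : nat) : nat := snd (cf_qpair a k).
Definition cf_qprev (a : nat -> nat) (k : nat) : nat := fst (cf_qpair a k).
Definition cf_p (a : nat -> nat) (k : nat) : nat := snd (cf_ppair a k).

Definition cf_conv (a : nat -> nat) (k : nat) : R :=
  INR (cf_p a k) / INR (cf_q a k).

(* [is_cf_expansion alpha a len]: the partial quotients a form a continued
   fraction expansion of alpha.
   - len = None : infinite expansion [a_0; a_1, a_2, ...], a_i >= 1 for
     i >= 1, whose convergents converge to alpha;
   - len = Some K : finite expansion [a_0; a_1, ..., a_K], a_i >= 1 for
     1 <= i <= K, whose value p_K/q_K equals alpha (regarded as followed
     by a partial quotient a_{K+1} = infinity). *)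
Definition is_cf_expansion (alpha : R) (a : nat -> nat) (len : option nat)
  : Prop :=
  match len with
  | None => (forall i, (0 < i)%nat -> (0 < a i)%nat) /\
            Un_cv (cf_conv a) alpha
  | Some K => (forall i, (0 < i <= K)%nat -> (0 < a i)%nat) /\
              cf_conv a K = alpha
  end.

(* Admissible indices (k, m) of semi-convergent denominators
   m q_k + q_{k-1}, 0 <= m <= a_{k+1}; for a finite expansion of length K
   the partial quotient a_{K+1} is infinity, so all m >= 0 are allowed
   for k = K, and no index k > K occurs. *)
Definition semiconv_index (a : nat -> nat) (len : option nat) (k m : nat)
  : Prop :=
  match len with
  | None => (m <= a (S k))%nat
  | Some K => ((k < K)%nat /\ (m <= a (S k))%nat) \/ k = K
  end.

Definition semiconv_den (a : nat -> nat) (k m : nat) : nat :=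
  (m * cf_q a k + cf_qprev a k)%nat.

(* alpha > 0 is an infinite loop mod n if, for every continued fraction
   expansion of alpha (both finite ones if alpha is rational), no
   semi-convergent denominator is divisible by n, except
   q_{-1} = 0 (the index k = 0, m = 0). *)
Definition infinite_loop_mod (n : nat) (alpha : R) : Prop :=
  0 < alpha /\
  forall (a : nat -> nat) (len : option nat),
    is_cf_expansion alpha a len ->
    forall k m : nat, semiconv_index a len k m ->
      (k, m) <> (0%nat, 0%nat) ->
      ~ Nat.divide n (semiconv_den a k m).

From Stdlib Require Import Reals ZArith Lia Lra Psatz Classical Arith Wf_nat.
Open Scope R_scope.

(* A real alpha > 0 that lies between two Farey neighbours
   p1/q1 and p2/q2 (|p1 q2 - p2 q1| = 1) has q1 among the semi-convergent
   denominators of one of its continued fraction expansions; for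
   p1/q1 = a/(cn) this denominator cn is divisible by n.

   The Farey fact is proved by descending the Stern-Brocot tree along the
   floor expansion of alpha.  A state is a level j of the expansion with a
   count 0 <= m <= a_j; the current node is the pair of denominators
   U = q_{j-1}, V = m q_{j-1} + q_{j-2}, and alpha corresponds to the point
   y = x_j - m, x_j the j-th complete quotient.  The target is encoded as a
   Farey pair of coordinate vectors (A1,B1), (A2,B2) with q1 = A1 U + B1 V
   and y between A1/B1 and A2/B2.  Raising m shifts the coordinates
   (A,B) -> (A-B,B), passing to level j+1 inverts y and swaps them; the
   coordinates shrink until (A1,B1) is a unit vector or a boundary case,
   where q1 is read off as a semi-convergent denominator. *)

(* q_{j-2}, p_{j-1} and p_{j-2}, with q_{-2} = 1 and p_{-2} = 0, so that
   q_j = a_j q_{j-1} + q_{j-2} and p_j = a_j p_{j-1} + p_{j-2} for all j. *)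
Definition cf_qprev2 (a : nat -> nat) (j : nat) : nat :=
  match j with O => 1%nat | S j' => cf_qprev a j' end.
Definition cf_pprev (a : nat -> nat) (j : nat) : nat := fst (cf_ppair a j).
Definition cf_pprev2 (a : nat -> nat) (j : nat) : nat :=
  match j with O => 0%nat | S j' => cf_pprev a j' end.

Lemma cf_q_rec a j : cf_q a j = (a j * cf_qprev a j + cf_qprev2 a j)%nat.
Proof.
  destruct j as [|j]; unfold cf_q, cf_qprev, cf_qprev2; simpl; [lia|].
  unfold cf_qprev. destruct (cf_qpair a j) as [u v]; simpl. lia.
Qed.

Lemma cf_qprev_S a j : cf_qprev a (S j) = cf_q a j.
Proof. unfold cf_q, cf_qprev; simpl. destruct (cf_qpair a j); reflexivity. Qed.

Lemma cf_p_rec a j : cf_p a j = (a j * cf_pprev a j + cf_pprev2 a j)%nat.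
Proof.
  destruct j as [|j]; unfold cf_p, cf_pprev, cf_pprev2; simpl; [lia|].
  unfold cf_pprev. destruct (cf_ppair a j) as [u v]; simpl. lia.
Qed.

Lemma cf_pprev_S a j : cf_pprev a (S j) = cf_p a j.
Proof. unfold cf_p, cf_pprev; simpl. destruct (cf_ppair a j); reflexivity. Qed.

Lemma cf_det a j :
  (cf_p a j * cf_qprev a j + 1 = cf_pprev a j * cf_q a j)%nat \/
  (cf_pprev a j * cf_q a j + 1 = cf_p a j * cf_qprev a j)%nat.
Proof.
  induction j as [|j IH].
  - left. unfold cf_p, cf_qprev, cf_pprev, cf_q; simpl. lia.
  - rewrite (cf_p_rec a (S j)), (cf_q_rec a (S j)). simpl cf_qprev2; simpl cf_pprev2.
    rewrite cf_qprev_S, cf_pprev_S.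
    destruct IH as [H|H]; [right|left]; nia.
Qed.

Lemma cf_q_bound a j : (forall i, (0 < i <= j)%nat -> (0 < a i)%nat) ->
  (1 <= cf_q a j /\ j <= cf_q a j /\ (1 <= j -> 1 <= cf_qprev a j))%nat.
Proof.
  induction j as [|j IH]; intros Ha.
  - unfold cf_q, cf_qprev; simpl. lia.
  - assert (IH' := IH (fun i Hi => Ha i ltac:(lia))).
    assert (Hj := Ha (S j) ltac:(lia)).
    rewrite cf_q_rec. simpl cf_qprev2. rewrite cf_qprev_S.
    destruct j as [|j].
    + unfold cf_q, cf_qprev in *; simpl in *. lia.
    + nia.
Qed.

Lemma cf_pairs_agree a a' j : (forall i, (i <= j)%nat -> a i = a' i) ->
  cf_qpair a j = cf_qpair a' j /\ cf_ppair a j = cf_ppair a' j.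
Proof.
  induction j as [|j IH]; intros H; simpl.
  - rewrite (H 0%nat); auto.
  - destruct (IH (fun i Hi => H i ltac:(lia))) as [E1 E2].
    rewrite E1, E2, (H (S j)); auto.
Qed.

Lemma cf_prevs_agree a a' K : (forall i, (i < K)%nat -> a i = a' i) ->
  cf_qprev a K = cf_qprev a' K /\ cf_qprev2 a K = cf_qprev2 a' K /\
  cf_pprev a K = cf_pprev a' K /\ cf_pprev2 a K = cf_pprev2 a' K.
Proof.
  intros H. destruct K as [|K].
  - unfold cf_qprev, cf_pprev; simpl. auto.
  - destruct (cf_pairs_agree a a' K (fun i Hi => H i ltac:(lia))) as [E1 E2].
    rewrite !cf_qprev_S, !cf_pprev_S. simpl cf_qprev2; simpl cf_pprev2.
    unfold cf_q, cf_qprev, cf_p, cf_pprev. rewrite E1, E2. auto.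
Qed.

Definition within (len : option nat) (j : nat) : Prop :=
  match len with None => True | Some K => (j <= K)%nat end.

Lemma within_pred len j : within len (S j) -> within len j.
Proof. destruct len; simpl; lia. Qed.

Definition is_semiconv_den (alpha : R) (Q : nat) : Prop :=
  exists a len, is_cf_expansion alpha a len /\
  exists k m, semiconv_index a len k m /\ (k, m) <> (0%nat, 0%nat) /\
              semiconv_den a k m = Q.

Lemma semiconv_den_not_loop n alpha Q :
  Nat.divide n Q -> is_semiconv_den alpha Q -> ~ infinite_loop_mod n alpha.
Proof.
  intros Hdiv [a [len [HE [k [m [Hidx [Hne Hden]]]]]]] [_ Hall].
  apply (Hall a len HE k m Hidx Hne). rewrite Hden. exact Hdiv.
Qed.

Lemma semiconv_of_level alpha a len Q j m : is_cf_expansion alpha a len ->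
  (0 < Q)%nat -> within len j -> (m <= a j)%nat ->
  Q = (m * cf_qprev a j + cf_qprev2 a j)%nat -> is_semiconv_den alpha Q.
Proof.
  intros HE HQ Hj Hm HQe. exists a, len. split; [exact HE|].
  destruct j as [|j].
  - exists 0%nat, 1%nat. unfold semiconv_den in *; simpl in HQe.
    unfold cf_qprev, cf_q in *; simpl in *.
    split; [|split; [congruence|lia]].
    destruct len as [K|]; simpl in *; destruct HE as [Hpos _].
    + destruct K as [|K]; [right; reflexivity|]. left. split; [lia|]. apply Hpos. lia.
    + apply Hpos. lia.
  - exists j, m. simpl cf_qprev2 in HQe. rewrite cf_qprev_S in HQe.
    split; [|split].
    + destruct len as [K|]; simpl in *; [left; split; lia|exact Hm].
    + intros E. injection E as -> ->.
      unfold semiconv_den, cf_qprev, cf_q in *; simpl in *. lia.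
    + unfold semiconv_den. lia.
Qed.

Lemma semiconv_of_qprev alpha a len Q j : is_cf_expansion alpha a len ->
  (0 < Q)%nat -> within len j -> Q = cf_qprev a j -> is_semiconv_den alpha Q.
Proof.
  intros HE HQ Hj HQe. destruct j as [|j].
  - unfold cf_qprev in HQe; simpl in HQe. lia.
  - rewrite cf_qprev_S, cf_q_rec in HQe.
    apply (semiconv_of_level alpha a len Q j (a j)); auto.
    exact (within_pred len j Hj).
Qed.

Lemma semiconv_of_last alpha a K Q t : is_cf_expansion alpha a (Some K) ->
  (0 < Q)%nat -> Q = semiconv_den a K t -> is_semiconv_den alpha Q.
Proof.
  intros HE HQ HQe. exists a, (Some K). split; [exact HE|].
  exists K, t. split; [right; reflexivity|]. split; [|auto].
  intros E; injection E as -> ->. unfold semiconv_den, cf_qprev, cf_q in *; simpl in *. lia.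
Qed.

(* The other finite expansion [a_0; ..., a_K - 1, 1] of a rational alpha
   has convergent denominator q_K after (a_K - 1) q_{K-1} + q_{K-2}, hence
   every t q_K + (a_K - 1) q_{K-1} + q_{K-2} is a semi-convergent
   denominator of alpha. *)
Lemma semiconv_of_split_last alpha a K Q t : is_cf_expansion alpha a (Some K) ->
  ((1 <= K)%nat -> (2 <= a K)%nat) -> (1 <= a K)%nat ->
  (Q + cf_qprev a K = (t + 1) * cf_q a K)%nat -> (0 < Q)%nat ->
  is_semiconv_den alpha Q.
Proof.
  intros HE HK2 HK1 HQe HQ.
  set (a' := fun i => if Nat.eqb i K then (a K - 1)%nat
                      else if Nat.eqb i (S K) then 1%nat else a i).
  assert (Hag : forall i, (i < K)%nat -> a i = a' i).
  { intros i Hi. unfold a'. destruct (Nat.eqb_spec i K); [lia|].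
    destruct (Nat.eqb_spec i (S K)); [lia|reflexivity]. }
  destruct (cf_prevs_agree a a' K Hag) as [E1 [E2 [E3 E4]]].
  assert (HaK : a' K = (a K - 1)%nat) by (unfold a'; rewrite Nat.eqb_refl; reflexivity).
  assert (HaSK : a' (S K) = 1%nat).
  { unfold a'. destruct (Nat.eqb_spec (S K) K); [lia|]. rewrite Nat.eqb_refl. reflexivity. }
  assert (Hq' : cf_q a' K = ((a K - 1) * cf_qprev a K + cf_qprev2 a K)%nat).
  { rewrite cf_q_rec, HaK, E1, E2. reflexivity. }
  assert (Hp' : cf_p a' K = ((a K - 1) * cf_pprev a K + cf_pprev2 a K)%nat).
  { rewrite cf_p_rec, HaK, E3, E4. reflexivity. }
  assert (HqS : cf_q a' (S K) = cf_q a K).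
  { rewrite (cf_q_rec a' (S K)), HaSK, cf_qprev_S. simpl cf_qprev2.
    rewrite Hq', <- E1, (cf_q_rec a K). nia. }
  assert (HpS : cf_p a' (S K) = cf_p a K).
  { rewrite (cf_p_rec a' (S K)), HaSK, cf_pprev_S. simpl cf_pprev2.
    rewrite Hp', <- E3, (cf_p_rec a K). nia. }
  apply (semiconv_of_last alpha a' (S K) Q t); auto.
  - destruct HE as [Hpos Hval]. split.
    + intros i Hi. unfold a'. destruct (Nat.eqb_spec i K).
      * subst. assert (2 <= a K)%nat by (apply HK2; lia). lia.
      * destruct (Nat.eqb_spec i (S K)); [lia|]. apply Hpos. lia.
    + unfold cf_conv in *. rewrite HqS, HpS. exact Hval.
  - unfold semiconv_den. rewrite HqS, cf_qprev_S, Hq'.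
    rewrite (cf_q_rec a K) in HQe |- *.
    destruct (a K) as [|k]; [lia|]. replace (S k - 1)%nat with k by lia. nia.
Qed.

Definition complete_quotients (alpha : R) (a : nat -> nat) (len : option nat)
    (x : nat -> R) : Prop :=
  x 0%nat = alpha /\
  (forall j, within len j -> INR (a j) <= x j < INR (a j) + 1) /\
  (forall j, within len (S j) -> INR (a j) < x j /\ x (S j) = / (x j - INR (a j))) /\
  (forall K, len = Some K -> x K = INR (a K)).

Lemma INR_pos_nat k : 0 < INR k -> (1 <= k)%nat.
Proof. intros H. destruct k; [simpl in H; lra|lia]. Qed.

Section CompleteQuotients.
Variables (alpha : R) (a : nat -> nat) (len : option nat) (x : nat -> R).
Hypothesis Hx : complete_quotients alpha a len x.

Lemma cq_gt1 j : within len (S j) -> 1 < x (S j).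
Proof.
  destruct Hx as [_ [Hfl [Hnext _]]]. intros Hj.
  destruct (Hnext j Hj) as [Ha HxS]. destruct (Hfl j (within_pred len j Hj)).
  rewrite HxS, <- Rinv_1. apply Rinv_lt_contravar; lra.
Qed.

Lemma cq_partial_quotient_pos i : (0 < i)%nat -> within len i -> (0 < a i)%nat.
Proof.
  intros Hi Hin. destruct i as [|i]; [lia|].
  pose proof (cq_gt1 i Hin). destruct Hx as [_ [Hfl _]]. destruct (Hfl (S i) Hin).
  apply INR_pos_nat. lra.
Qed.

Lemma cq_integral_last j : within len j -> x j = INR (a j) -> len = Some j.
Proof.
  destruct Hx as [_ [_ [Hnext _]]]. intros Hj E. destruct len as [K|]; simpl in *.
  - destruct (Nat.eq_dec j K); [subst; auto|].
    destruct (Hnext j ltac:(simpl; lia)). lra.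
  - destruct (Hnext j I). lra.
Qed.

Lemma cq_moebius j : within len j ->
  alpha * (INR (cf_qprev a j) * x j + INR (cf_qprev2 a j)) =
  INR (cf_pprev a j) * x j + INR (cf_pprev2 a j).
Proof.
  destruct Hx as [Hx0 [Hfl [Hnext _]]].
  induction j as [|j IH]; intros Hj.
  - unfold cf_qprev, cf_pprev; simpl. rewrite Hx0. ring.
  - specialize (IH (within_pred len j Hj)). destruct (Hnext j Hj) as [Hlt HxS].
    rewrite cf_qprev_S, cf_pprev_S, cf_q_rec, cf_p_rec. simpl cf_qprev2; simpl cf_pprev2.
    rewrite HxS, !plus_INR, !mult_INR.
    set (r := x j - INR (a j)) in *.
    assert (Hr : 0 < r) by (unfold r; lra).
    assert (Ex : x j = INR (a j) + r) by (unfold r; ring).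
    rewrite Ex in IH.
    transitivity (alpha * (INR (cf_qprev a j) * (INR (a j) + r) + INR (cf_qprev2 a j)) * / r).
    + field; lra.
    + rewrite IH. field; lra.
Qed.

Lemma cq_finite_value K : len = Some K -> cf_conv a K = alpha.
Proof.
  intros HK.
  assert (HwK : forall i, (i <= K)%nat -> within len i) by (rewrite HK; simpl; lia).
  pose proof (cq_moebius K (HwK K (le_n K))) as HI.
  destruct Hx as [_ [_ [_ Hlast]]]. rewrite (Hlast K HK) in HI.
  unfold cf_conv. rewrite cf_q_rec, cf_p_rec.
  assert (Hq : (1 <= cf_q a K)%nat).
  { apply cf_q_bound. intros i Hi. apply cq_partial_quotient_pos; [lia|apply HwK; lia]. }
  rewrite cf_q_rec in Hq.
  assert (Hq' : 1 <= INR (a K * cf_qprev a K + cf_qprev2 a K)) by (apply (le_INR 1); lia).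
  rewrite !plus_INR, !mult_INR in *.
  replace (INR (a K) * INR (cf_pprev a K) + INR (cf_pprev2 a K)) with
    (alpha * (INR (cf_qprev a K) * INR (a K) + INR (cf_qprev2 a K))) by (rewrite HI; ring).
  field. lra.
Qed.

(* The convergents of an infinite floor expansion tend to alpha:
   |p_k/q_k - alpha| = 1/(q_k (q_k x_{k+1} + q_{k-1})) <= 1/q_k <= 1/k. *)
Lemma cq_infinite_limit : len = None -> Un_cv (cf_conv a) alpha.
Proof.
  intros Hlen. assert (Hw : forall i, within len i) by (rewrite Hlen; simpl; auto).
  intros eps Heps.
  destruct (archimed_cor1 eps Heps) as [N [HN HN0]].
  exists N. intros k Hk. unfold R_dist, cf_conv.
  pose proof (cq_moebius (S k) (Hw (S k))) as HI.
  rewrite cf_qprev_S, cf_pprev_S in HI. simpl cf_qprev2 in HI; simpl cf_pprev2 in HI.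
  assert (HX := cq_gt1 k (Hw (S k))).
  destruct (cf_q_bound a k (fun i Hi => cq_partial_quotient_pos i ltac:(lia) (Hw i)))
    as [Hq1 [Hqk _]].
  assert (Hdet := cf_det a k).
  set (X := x (S k)) in *.
  assert (Q1 : 1 <= INR (cf_q a k)) by (apply (le_INR 1); lia).
  assert (QK : INR N <= INR (cf_q a k)) by (apply le_INR; lia).
  assert (HN1 : 0 < INR N) by (apply lt_0_INR; lia).
  assert (Qp : 0 <= INR (cf_qprev a k)) by apply pos_INR.
  set (q := INR (cf_q a k)) in *. set (qp := INR (cf_qprev a k)) in *.
  set (p := INR (cf_p a k)) in *. set (pp := INR (cf_pprev a k)) in *.
  assert (HD : 0 < q * X + qp) by nra.
  assert (Hd : p * qp + 1 = pp * q \/ pp * q + 1 = p * qp).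
  { destruct Hdet as [E|E]; [left|right]; apply (f_equal INR) in E;
    rewrite !plus_INR, !mult_INR in E; exact E. }
  assert (Ediff : p / q - alpha = (p * qp - pp * q) / (q * (q * X + qp))).
  { replace alpha with ((p * X + pp) / (q * X + qp)) by (rewrite <- HI; field; lra).
    field. lra. }
  assert (Habs : Rabs (p * qp - pp * q) = 1).
  { destruct Hd as [E|E]; [replace (p*qp - pp*q) with (-1) by lra|
                           replace (p*qp - pp*q) with 1 by lra];
    unfold Rabs; destruct Rcase_abs; lra. }
  rewrite Ediff. unfold Rdiv. rewrite Rabs_mult, Habs, Rmult_1_l.
  rewrite Rabs_inv, Rabs_right by nra.
  apply Rle_lt_trans with (/ INR N); [|exact HN].
  apply Rinv_le_contravar; [lra|]. nra.
Qed.

Lemma cq_is_cf_expansion : is_cf_expansion alpha a len.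
Proof.
  unfold is_cf_expansion.
  pose proof cq_partial_quotient_pos as Hpos. pose proof cq_finite_value as Hval.
  pose proof cq_infinite_limit as Hlim.
  destruct len as [K|]; simpl in Hpos; split; auto.
  intros i Hi. apply Hpos; lia.
Qed.

End CompleteQuotients.

Fixpoint complete_quotient (alpha : R) (j : nat) : R :=
  match j with
  | O => alpha
  | S j => / (complete_quotient alpha j - IZR (Int_part (complete_quotient alpha j)))
  end.

Lemma floor_nat_spec y : 0 <= y ->
  INR (Z.to_nat (Int_part y)) = IZR (Int_part y) /\
  IZR (Int_part y) <= y < IZR (Int_part y) + 1.
Proof.
  intros Hy. destruct (base_Int_part y) as [H1 H2].
  assert (Hnn : (0 <= Int_part y)%Z).
  { assert (Hgt : -1 < IZR (Int_part y)) by lra. apply lt_IZR in Hgt. lia. }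
  split; [|lra]. rewrite INR_IZR_INZ, Z2Nat.id; auto.
Qed.

Lemma floor_expansion_exists alpha : 0 < alpha ->
  exists a len x, complete_quotients alpha a len x.
Proof.
  intros Halpha.
  set (x := complete_quotient alpha).
  set (a := fun j => Z.to_nat (Int_part (x j))).
  set (integral := fun j => x j = INR (a j)).
  assert (Hfl : forall j, 0 <= x j -> INR (a j) <= x j < INR (a j) + 1).
  { intros j Hj. unfold a. destruct (floor_nat_spec (x j) Hj) as [-> ?]. exact H. }
  assert (Hstep : forall j, 0 < x j -> ~ integral j ->
            INR (a j) < x j /\ x (S j) = / (x j - INR (a j)) /\ 1 < x (S j)).
  { intros j Hj Hint. destruct (Hfl j ltac:(lra)) as [B1 B2].
    assert (Hlt : INR (a j) < x j) by (unfold integral in Hint; lra).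
    assert (E : x (S j) = / (x j - INR (a j))).
    { unfold a. rewrite (proj1 (floor_nat_spec (x j) ltac:(lra))). reflexivity. }
    split; [exact Hlt|split; [exact E|]].
    rewrite E, <- Rinv_1. apply Rinv_lt_contravar; lra. }
  assert (Hbuild : forall len, (forall j, within len j -> 0 < x j) ->
            (forall j, within len (S j) -> ~ integral j) ->
            (forall K, len = Some K -> integral K) ->
            complete_quotients alpha a len x).
  { intros len Hpos Hnot Hlast. split; [reflexivity|split; [|split; [|exact Hlast]]].
    - intros j Hj. apply Hfl. specialize (Hpos j Hj). lra.
    - intros j Hj. destruct (Hstep j (Hpos j (within_pred len j Hj)) (Hnot j Hj)) as [? [? _]].
      auto. }
  destruct (classic (exists j, integral j)) as [Hex|Hnone].
  - assert (Hdec : forall j, integral j \/ ~ integral j) by (intros; apply classic).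
    destruct (dec_inh_nat_subset_has_unique_least_element integral Hdec Hex)
      as [K [[HK Hleast] _]].
    assert (Hpos : forall j, (j <= K)%nat -> 0 < x j).
    { induction j as [|j IH]; intros Hj; [exact Halpha|].
      assert (Hnj : ~ integral j) by (intros Hi; specialize (Hleast j Hi); lia).
      destruct (Hstep j (IH ltac:(lia)) Hnj) as [_ [_ ?]]. lra. }
    exists a, (Some K), x. apply Hbuild.
    + exact Hpos.
    + intros j Hj Hi. specialize (Hleast j Hi). simpl in Hj. lia.
    + intros K' E. injection E as <-. exact HK.
  - assert (Hpos : forall j, 0 < x j).
    { induction j as [|j IH]; [exact Halpha|].
      destruct (Hstep j IH (fun Hi => Hnone (ex_intro _ j Hi))) as [_ [_ ?]]. lra. }
    exists a, None, x. apply Hbuild.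
    + intros j _. apply Hpos.
    + intros j _ Hi. apply Hnone. exists j. exact Hi.
    + intros K E; discriminate.
Qed.

Definition farey (A1 B1 A2 B2 : nat) : Prop :=
  Z.abs (Z.of_nat (A1 * B2) - Z.of_nat (A2 * B1)) = 1%Z.

(* y lies (weakly) between A1/B1 and A2/B2, written without division. *)
Definition between (y : R) (A1 B1 A2 B2 : nat) : Prop :=
  (INR A1 - INR B1 * y) * (INR A2 - INR B2 * y) <= 0.

Lemma farey_cases A1 B1 A2 B2 : farey A1 B1 A2 B2 ->
  ((B1 <= A1 /\ B2 <= A2) \/ (A1 <= B1 /\ A2 <= B2) \/
   (A1 = 1 /\ B1 = 0 /\ A2 = 0 /\ B2 = 1) \/
   (A1 = 0 /\ B1 = 1 /\ A2 = 1 /\ B2 = 0))%nat.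
Proof.
  unfold farey. intros H. rewrite !Nat2Z.inj_mul in H.
  destruct (le_lt_dec B1 A1); destruct (le_lt_dec B2 A2); try (left; lia);
    try (right; left; lia).
  - destruct (Nat.eq_dec B1 A1); [right; left; lia|].
    right; right; left.
    assert (A1 * B2 >= (B1 + 1) * (A2 + 1))%nat by nia. nia.
  - destruct (Nat.eq_dec B2 A2); [right; left; lia|].
    right; right; right.
    assert (A2 * B1 >= (B2 + 1) * (A1 + 1))%nat by nia. nia.
Qed.

Lemma farey_swap A1 B1 A2 B2 : farey A1 B1 A2 B2 -> farey B1 A1 B2 A2.
Proof. unfold farey. lia. Qed.

Lemma farey_shift A1 B1 A2 B2 : (B1 <= A1)%nat -> (B2 <= A2)%nat ->
  farey A1 B1 A2 B2 -> farey (A1 - B1) B1 (A2 - B2) B2.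
Proof.
  unfold farey. intros H1 H2 H.
  rewrite !Nat2Z.inj_mul, !Nat2Z.inj_sub by lia. rewrite !Nat2Z.inj_mul in H.
  replace ((Z.of_nat A1 - Z.of_nat B1) * Z.of_nat B2 -
           (Z.of_nat A2 - Z.of_nat B2) * Z.of_nat B1)%Z
    with (Z.of_nat A1 * Z.of_nat B2 - Z.of_nat A2 * Z.of_nat B1)%Z by ring.
  exact H.
Qed.

Lemma farey_diag_l A A2 B2 : farey A A A2 B2 -> A = 1%nat.
Proof.
  unfold farey.
  rewrite !Nat2Z.inj_mul, (Z.mul_comm (Z.of_nat A2)), <- Z.mul_sub_distr_l, Z.abs_mul.
  intros H. apply Z.eq_mul_1_nonneg in H; lia.
Qed.

Lemma farey_diag_r A1 B1 A : farey A1 B1 A A -> A = 1%nat.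
Proof. unfold farey. intros H. apply (farey_diag_l A B1 A1). unfold farey. lia. Qed.

Lemma between_inv y A1 B1 A2 B2 : 0 < y ->
  between y A1 B1 A2 B2 -> between (/ y) B1 A1 B2 A2.
Proof.
  unfold between. intros Hy H.
  replace ((INR B1 - INR A1 * / y) * (INR B2 - INR A2 * / y))
    with (((INR A1 - INR B1 * y) * (INR A2 - INR B2 * y)) * (/ y * / y))
    by (field; lra).
  assert (0 < / y) by (apply Rinv_0_lt_compat; lra).
  assert (0 < / y * / y) by nra. nra.
Qed.

Lemma between_shift y A1 B1 A2 B2 : (B1 <= A1)%nat -> (B2 <= A2)%nat ->
  between y A1 B1 A2 B2 -> between (y - 1) (A1 - B1) B1 (A2 - B2) B2.
Proof.
  unfold between. intros H1 H2 H. rewrite !minus_INR by lia.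
  replace ((INR A1 - INR B1 - INR B1 * (y - 1)) * (INR A2 - INR B2 - INR B2 * (y - 1)))
    with ((INR A1 - INR B1 * y) * (INR A2 - INR B2 * y)) by ring.
  exact H.
Qed.

Lemma between_zero A1 B1 A2 B2 : between 0 A1 B1 A2 B2 -> A1 = 0%nat \/ A2 = 0%nat.
Proof.
  unfold between. rewrite !Rmult_0_r, !Rminus_0_r, <- mult_INR. intros H.
  destruct (Nat.eq_dec (A1 * A2) 0) as [E|E]; [lia|].
  assert (0 < INR (A1 * A2)) by (apply lt_0_INR; lia). lra.
Qed.

Lemma between_boundary y A1 B1 A2 B2 : 1 <= y ->
  (A1 <= B1)%nat -> (A2 <= B2)%nat -> farey A1 B1 A2 B2 ->
  between y A1 B1 A2 B2 ->
  y = 1 /\ ((A1 = 1 /\ B1 = 1) \/ (A2 = 1 /\ B2 = 1))%nat.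
Proof.
  unfold between. intros Hy H1 H2 Hfar H.
  assert (Hle : forall A B, (A <= B)%nat -> INR A - INR B * y <= INR A - INR B).
  { intros A B _. assert (0 <= INR B) by apply pos_INR. nra. }
  assert (Hnp : forall A B, (A <= B)%nat -> INR A - INR B <= 0).
  { intros A B HAB. apply le_INR in HAB. lra. }
  assert (F1 := Hle A1 B1 H1). assert (F2 := Hle A2 B2 H2).
  assert (G1 := Hnp A1 B1 H1). assert (G2 := Hnp A2 B2 H2).
  assert (Hdiag : forall A B, (A <= B)%nat -> INR A - INR B * y = 0 ->
                    (B = 0 /\ A = 0)%nat \/ (y = 1 /\ A = B)).
  { intros A B HAB E. destruct B as [|B].
    - left. split; [reflexivity|]. apply INR_eq. simpl in *. lra.
    - right. apply le_INR in HAB.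
      assert (1 <= INR (S B)) by (apply (le_INR 1); lia).
      assert (Ey : y = 1) by nra. split; [exact Ey|].
      apply INR_eq. subst y. lra. }
  assert (Hz : (INR A1 - INR B1 * y) * (INR A2 - INR B2 * y) = 0) by nra.
  apply Rmult_integral in Hz as [Z1|Z2].
  - destruct (Hdiag A1 B1 H1 Z1) as [[-> ->]|[Ey ->]]; [unfold farey in Hfar; lia|].
    split; [exact Ey|left]. pose proof (farey_diag_l B1 A2 B2 Hfar). lia.
  - destruct (Hdiag A2 B2 H2 Z2) as [[-> ->]|[Ey ->]]; [unfold farey in Hfar; lia|].
    split; [exact Ey|right]. pose proof (farey_diag_r A1 B1 B2 Hfar). lia.
Qed.

Lemma between_of_bounds y p1 q1 p2 q2 : (0 < q1)%nat -> (0 < q2)%nat ->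
  Rmin (INR p1 / INR q1) (INR p2 / INR q2) <= y <=
  Rmax (INR p1 / INR q1) (INR p2 / INR q2) ->
  between y p1 q1 p2 q2.
Proof.
  unfold between. intros Hq1 Hq2 Hy.
  apply lt_0_INR in Hq1, Hq2.
  set (u := INR p1 / INR q1) in *. set (v := INR p2 / INR q2) in *.
  replace (INR p1) with (INR q1 * u) by (unfold u; field; lra).
  replace (INR p2) with (INR q2 * v) by (unfold v; field; lra).
  assert (Huv : (u - y) * (v - y) <= 0).
  { unfold Rmin, Rmax in Hy. destruct (Rle_dec u v); nra. }
  replace ((INR q1 * u - INR q1 * y) * (INR q2 * v - INR q2 * y))
    with ((INR q1 * INR q2) * ((u - y) * (v - y))) by ring.
  assert (0 < INR q1 * INR q2) by nra. nra.
Qed.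

Section Descent.
Variables (alpha : R) (a : nat -> nat) (len : option nat) (x : nat -> R) (Q : nat).
Hypothesis Hx : complete_quotients alpha a len x.
Hypothesis HQ : (0 < Q)%nat.

Let Hexp : is_cf_expansion alpha a len := cq_is_cf_expansion alpha a len x Hx.

(* Descent invariant at level j with count m: the node has denominators
   U = q_{j-1} and V = m q_{j-1} + q_{j-2}, Q = A1 U + B1 V, and the point
   y = x_j - m lies between the Farey neighbours A1/B1 and A2/B2. *)
Definition descent_inv (j m A1 B1 A2 B2 : nat) : Prop :=
  within len j /\ (m <= a j)%nat /\
  Q = (A1 * cf_qprev a j + B1 * (m * cf_qprev a j + cf_qprev2 a j))%nat /\
  farey A1 B1 A2 B2 /\ between (x j - INR m) A1 B1 A2 B2.

(* Shifting lowers A1 + B1 + A2 + B2; passing to the next level keeps it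
   and resets the flag m = a_j. *)
Definition descent_measure (j m A1 B1 A2 B2 : nat) : nat :=
  (2 * (A1 + B1 + A2 + B2) + (if Nat.eqb m (a j) then 1 else 0))%nat.

(* y = 0: x_j = a_j is the last complete quotient, and Q is either
   q_j or a denominator t q_j + q_{j-1} after the last convergent. *)
Lemma descent_at_last j A1 B1 A2 B2 :
  descent_inv j (a j) A1 B1 A2 B2 -> x j = INR (a j) -> is_semiconv_den alpha Q.
Proof.
  intros [Hj [_ [HQe [Hfar Hbet]]]] Hint.
  rewrite Hint, Rminus_diag in Hbet.
  destruct (between_zero A1 B1 A2 B2 Hbet) as [-> | ->]; unfold farey in Hfar.
  - assert (HB1 : B1 = 1%nat).
    { assert (HA : (A2 * B1 = 1)%nat) by lia. apply Nat.eq_mul_1 in HA. tauto. }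
    subst B1. apply (semiconv_of_level alpha a len Q j (a j)); auto. lia.
  - assert (HA1 : A1 = 1%nat).
    { assert (HA : (A1 * B2 = 1)%nat) by lia. apply Nat.eq_mul_1 in HA. tauto. }
    subst A1. apply (semiconv_of_last alpha a j Q B1); auto.
    + rewrite <- (cq_integral_last alpha a len x Hx j Hj Hint). exact Hexp.
    + unfold semiconv_den. rewrite cf_q_rec. lia.
Qed.

(* 0 < y < 1: pass to level j + 1, where the new point is 1/y and the
   roles of U and V (hence of the coordinates) are exchanged. *)
Lemma descent_next_level j A1 B1 A2 B2 :
  descent_inv j (a j) A1 B1 A2 B2 -> x j <> INR (a j) ->
  descent_inv (S j) 0 B1 A1 B2 A2 /\
  (descent_measure (S j) 0 B1 A1 B2 A2 < descent_measure j (a j) A1 B1 A2 B2)%nat.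
Proof.
  intros [Hj [_ [HQe [Hfar Hbet]]]] Hnint.
  pose proof Hx as [_ [_ [Hnext Hlast]]].
  assert (HjS : within len (S j)).
  { destruct len as [K|]; simpl in *; auto.
    destruct (Nat.eq_dec j K) as [->|]; [|lia]. exfalso. exact (Hnint (Hlast K eq_refl)). }
  destruct (Hnext j HjS) as [Hlt HxS].
  assert (Ha1 : (0 < a (S j))%nat)
    by exact (cq_partial_quotient_pos alpha a len x Hx (S j) ltac:(lia) HjS).
  split.
  - split; [exact HjS|]. split; [lia|]. split.
    + rewrite cf_qprev_S, cf_q_rec. simpl cf_qprev2. lia.
    + split; [exact (farey_swap A1 B1 A2 B2 Hfar)|].
      simpl INR. rewrite Rminus_0_r, HxS. apply between_inv; [lra|exact Hbet].
  - unfold descent_measure. rewrite Nat.eqb_refl.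
    destruct (Nat.eqb_spec 0 (a (S j))); lia.
Qed.

(* y >= 1 and both neighbours >= 1: move to the child node V + U,
   i.e. m -> m + 1, y -> y - 1, (A, B) -> (A - B, B). *)
Lemma descent_shift j m A1 B1 A2 B2 :
  descent_inv j m A1 B1 A2 B2 -> (m < a j)%nat ->
  (B1 <= A1)%nat -> (B2 <= A2)%nat ->
  descent_inv j (S m) (A1 - B1) B1 (A2 - B2) B2 /\
  (descent_measure j (S m) (A1 - B1) B1 (A2 - B2) B2 <
   descent_measure j m A1 B1 A2 B2)%nat.
Proof.
  intros [Hj [_ [HQe [Hfar Hbet]]]] Hm HB1 HB2.
  assert (HB : (1 <= B1 + B2)%nat) by (unfold farey in Hfar; nia).
  split.
  - split; [exact Hj|]. split; [lia|]. split; [rewrite HQe; nia|].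
    split; [exact (farey_shift A1 B1 A2 B2 HB1 HB2 Hfar)|].
    rewrite S_INR. replace (x j - (INR m + 1)) with ((x j - INR m) - 1) by ring.
    exact (between_shift _ A1 B1 A2 B2 HB1 HB2 Hbet).
  - unfold descent_measure. destruct (Nat.eqb_spec m (a j)); [lia|].
    destruct (Nat.eqb (S m) (a j)); lia.
Qed.

(* y >= 1 and both neighbours <= 1: then y = 1 and one neighbour is 1/1.
   Either Q = U + V = (m+1) q_{j-1} + q_{j-2}, or Q = A1 (U + V) + V with
   x_j = m + 1 = a_j the last complete quotient, a semi-convergent
   denominator of the other expansion [..., a_j - 1, 1]. *)
Lemma descent_boundary j m A1 B1 A2 B2 :
  descent_inv j m A1 B1 A2 B2 -> (m < a j)%nat ->
  (A1 <= B1)%nat -> (A2 <= B2)%nat -> is_semiconv_den alpha Q.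
Proof.
  intros [Hj [_ [HQe [Hfar Hbet]]]] Hm HA1 HA2.
  pose proof Hx as [_ [Hfl _]]. destruct (Hfl j Hj) as [Hxa _].
  assert (Hma : INR (S m) <= INR (a j)) by (apply le_INR; lia). rewrite S_INR in Hma.
  destruct (between_boundary (x j - INR m) A1 B1 A2 B2 ltac:(lra) HA1 HA2 Hfar Hbet)
    as [Hy [[-> ->] | [-> ->]]].
  - apply (semiconv_of_level alpha a len Q j (S m)); auto. lia.
  - assert (HB1 : B1 = S A1) by (unfold farey in Hfar; nia). subst B1.
    assert (Hint : x j = INR (a j)) by lra.
    assert (Eam : a j = S m) by (apply INR_eq; rewrite S_INR; lra).
    pose proof (cq_integral_last alpha a len x Hx j Hj Hint) as Hlen.
    apply (semiconv_of_split_last alpha a j Q A1); auto.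
    + rewrite <- Hlen. exact Hexp.
    + intros Hj1. destruct j as [|j']; [lia|].
      pose proof (cq_gt1 alpha a len x Hx j' Hj) as Hgt. rewrite Hint in Hgt.
      destruct (a (S j')) as [|[|k]]; simpl in Hgt; lra || lia.
    + lia.
    + rewrite HQe, (cf_q_rec a j), Eam. nia.
Qed.

Lemma descent_step j m A1 B1 A2 B2 :
  descent_inv j m A1 B1 A2 B2 ->
  is_semiconv_den alpha Q \/
  exists j' m' A1' B1' A2' B2', descent_inv j' m' A1' B1' A2' B2' /\
    (descent_measure j' m' A1' B1' A2' B2' < descent_measure j m A1 B1 A2 B2)%nat.
Proof.
  intros Hinv. pose proof Hinv as [Hj [Hm [HQe [Hfar _]]]].
  destruct (Nat.eq_dec m (a j)) as [-> | Hne].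
  - destruct (Req_dec (x j) (INR (a j))) as [Hint | Hnint].
    + left. exact (descent_at_last j A1 B1 A2 B2 Hinv Hint).
    + right. exists (S j), 0%nat, B1, A1, B2, A2.
      exact (descent_next_level j A1 B1 A2 B2 Hinv Hnint).
  - assert (Hlt : (m < a j)%nat) by lia.
    destruct (farey_cases _ _ _ _ Hfar)
      as [[HB1 HB2] | [[HA1 HA2] | [[-> [-> [-> ->]]] | [-> [-> [-> ->]]]]]].
    + right. exists j, (S m), (A1 - B1)%nat, B1, (A2 - B2)%nat, B2.
      exact (descent_shift j m A1 B1 A2 B2 Hinv Hlt HB1 HB2).
    + left. exact (descent_boundary j m A1 B1 A2 B2 Hinv Hlt HA1 HA2).
    + left. apply (semiconv_of_qprev alpha a len Q j); auto. lia.
    + left. apply (semiconv_of_level alpha a len Q j m); auto. lia.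
Qed.

Lemma descent N : forall j m A1 B1 A2 B2,
  (descent_measure j m A1 B1 A2 B2 < N)%nat -> descent_inv j m A1 B1 A2 B2 ->
  is_semiconv_den alpha Q.
Proof.
  induction N as [|N IH]; intros j m A1 B1 A2 B2 HN Hinv; [lia|].
  destruct (descent_step j m A1 B1 A2 B2 Hinv)
    as [Hgood | [j' [m' [A1' [B1' [A2' [B2' [Hinv' Hlt]]]]]]]]; [exact Hgood|].
  exact (IH j' m' A1' B1' A2' B2' ltac:(lia) Hinv').
Qed.

End Descent.

(* If alpha > 0 lies between Farey neighbours p1/q1 and p2/q2, then q1 is a
   semi-convergent denominator of alpha: start the descent at the root
   U = q_{-1} = 0, V = q_{-2} = 1, where the coordinates are (p1, q1). *)
Lemma farey_semiconv alpha p1 q1 p2 q2 : 0 < alpha -> (0 < q1)%nat ->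
  farey p1 q1 p2 q2 -> between alpha p1 q1 p2 q2 -> is_semiconv_den alpha q1.
Proof.
  intros Halpha Hq Hfar Hbet.
  destruct (floor_expansion_exists alpha Halpha) as [a [len [x Hx]]].
  apply (descent alpha a len x q1 Hx Hq (S (descent_measure a 0 0 p1 q1 p2 q2))
           0 0 p1 q1 p2 q2); [lia|].
  split; [destruct len; simpl; auto; lia|]. split; [lia|].
  split; [unfold cf_qprev; simpl; lia|]. split; [exact Hfar|].
  destruct Hx as [Hx0 _]. simpl INR. rewrite Rminus_0_r, Hx0. exact Hbet.
Qed.

Theorem mainTheorem9 (n a b c d : nat)
  (ha : (0 < a)%nat) (hb : (0 < b)%nat) (hc : (0 < c)%nat)
  (hd : (0 < d)%nat) (hn : (0 < n)%nat)
  (hdet : Z.abs (Z.of_nat (a * d) - Z.of_nat (b * c * n)) = 1%Z)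
  (alpha : R) :
  Rmin (INR a / INR (c * n)) (INR b / INR d) <= alpha <=
  Rmax (INR a / INR (c * n)) (INR b / INR d) ->
  ~ infinite_loop_mod n alpha.
Proof.
  intros Hbounds Hloop.
  assert (Halpha : 0 < alpha) by (destruct Hloop; assumption).
  assert (Hcn : (0 < c * n)%nat) by nia.
  assert (Hfar : farey a (c * n) b d) by (unfold farey; rewrite Nat.mul_assoc; exact hdet).
  assert (Hbet : between alpha a (c * n) b d)
    by exact (between_of_bounds alpha a (c * n) b d Hcn hd Hbounds).
  apply (semiconv_den_not_loop n alpha (c * n)); [exists c; lia| |exact Hloop].
  exact (farey_semiconv alpha a (c * n) b d Halpha Hcn Hfar Hbet).
Qed.
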